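(* Under the standing assumptions below, and for $x$ sufficiently large (in terms of $\epsilon$), if $|U|\geq 2$ then all elements of $A$ are even and there exists $a\in\{1,\dots,8\}$ such that for every $n\in A$: $n\equiv 2\pmod 4\iff n\equiv a\pmod 9$, and $n\equiv 0\pmod 4\iff n\equiv -a\pmod 9$.
   Context: Standing assumptions and notation: $\epsilon>0$ is fixed, $\delta_0=\frac14-\frac{2}{\pi^2}$, and $A\subseteq[1,x]\cap\mathbb{N}$ is a set with $|A|>(\delta_0+\epsilon)x$ such that $A+A=\{a+b:a,b\in A\}$ contains no squarefree integer, and $A$ is not a subset of $4\mathbb{N}$, nor of $9\mathbb{N}$, nor of $\{n\in\mathbb{N}:n\equiv 2\pmod 4\}$. For $a\in\{0,\dots,35\}$ put $\delta_a=\frac{36\cdot\#\{n\in A: n\equiv a\pmod{36}\}}{x}$. Let $U$ be the set of residues $a\bmod 36$ with $\delta_a>1-\frac{9}{\pi^2}+\epsilon/100$, let $V$ be the set of residues $a\bmod 36$ with $\delta_a>0$, and let $Q=\{0,4,8,9,12,16,18,20,24,27,28,32\}$ (the residue classes mod $36$ containing no squarefree integers). *)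

From Stdlib Require Import Reals Lra Lia Arith List.
Open Scope R_scope.

Definition squarefree (n : nat) : Prop :=
  (1 <= n)%nat /\ forall d : nat, Nat.divide (d * d) n -> d = 1%nat.

Definition delta0 : R := / 4 - 2 / (PI ^ 2).

(* A is a finite set of naturals, represented as a duplicate-free list. *)
Definition count_res (A : list nat) (a : nat) : nat :=
  length (filter (fun n => Nat.eqb (n mod 36) a) A).

Definition delta (x : R) (A : list nat) (a : nat) : R :=
  36 * INR (count_res A a) / x.

Definition inU (eps x : R) (A : list nat) (a : nat) : Prop :=
  (a < 36)%nat /\ delta x A a > 1 - 9 / (PI ^ 2) + eps / 100.

From Stdlib Require Import Reals Lra Lia Arith List Bool ZArith Classical.
Import ListNotations.
Open Scope R_scope.

(* Let u be in U and b in A.  The map n |-> n + b sends the elements of A of class u mod 36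
   injectively to non-squarefree integers of (b, b + x] in the class c = u + b mod 36.  If c
   is not in Q, the non-squarefree integers of c have relative density at most about
   1 - 9/pi^2 in every such interval, which delta_u > 1 - 9/pi^2 + eps/100 exceeds; hence
   u + b lies in Q for all b in A.  For two distinct u in U, and A not inside 4N, 9N or 2 + 4N, a finite check
   modulo 36 leaves only the residue patterns of the statement.

   The density of squarefree integers in a class c outside Q is obtained without Moebius
   inversion: a non-squarefree n in class c factors uniquely as q^2 s with s squarefree and q >= 2
   coprime to 6, s lying in a class determined by c and q.  So the number of non-squarefree
   n <= Z in class c is the sum over q of the number of squarefree s <= Z/q^2 in the
   corresponding classes.  Hence a density bound a for the squarefree numbers (uniform over
   the classes) yields the opposite bound 1 - a T, with T = sum 1/q^2; iterating converges to
   1/(1 + T) >= 9/pi^2, since T <= pi^2/9 - 1 by Hofbauer's proof of the Basel bound. *)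

Fixpoint rsum (f : nat -> R) (n : nat) : R :=
  match n with O => 0 | S m => rsum f m + f m end.

Lemma rsum_ext f g n : (forall k, (k < n)%nat -> f k = g k) -> rsum f n = rsum g n.
Proof.
  induction n as [|n IH]; simpl; intros H; [reflexivity|].
  rewrite IH by (intros; apply H; lia). rewrite H by lia. reflexivity.
Qed.

Lemma rsum_le f g n : (forall k, (k < n)%nat -> f k <= g k) -> rsum f n <= rsum g n.
Proof.
  induction n as [|n IH]; simpl; intros H; [lra|].
  assert (rsum f n <= rsum g n) by (apply IH; intros; apply H; lia).
  assert (f n <= g n) by (apply H; lia). lra.
Qed.

Lemma rsum_plus f g n : rsum (fun k => f k + g k) n = rsum f n + rsum g n.
Proof. induction n; simpl; [lra|]. rewrite IHn. lra. Qed.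

Lemma rsum_scal c f n : rsum (fun k => c * f k) n = c * rsum f n.
Proof. induction n; simpl; [lra|]. rewrite IHn. lra. Qed.

Lemma rsum_const a n : rsum (fun _ => a) n = INR n * a.
Proof. induction n; simpl rsum; [simpl; lra|]. rewrite IHn, S_INR. lra. Qed.

Lemma rsum_nonneg f n : (forall k, (k < n)%nat -> 0 <= f k) -> 0 <= rsum f n.
Proof.
  intros H. replace 0 with (rsum (fun _ => 0) n) by (rewrite rsum_const; lra).
  apply rsum_le; auto.
Qed.

Lemma rsum_app f a b : rsum f (a + b) = rsum f a + rsum (fun k => f (a + k)%nat) b.
Proof.
  induction b; simpl.
  - rewrite Nat.add_0_r. lra.
  - rewrite Nat.add_succ_r. simpl. rewrite IHb. lra.
Qed.

Lemma rsum_rev f n : rsum (fun k => f (n - 1 - k)%nat) n = rsum f n.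
Proof.
  revert f; induction n as [|m IH]; intros f; [reflexivity|].
  replace (S m) with (1 + m)%nat at 1 by lia. rewrite rsum_app.
  replace (rsum (fun k => f (S m - 1 - (1 + k))%nat) m) with (rsum (fun k => f (m - 1 - k)%nat) m)
    by (apply rsum_ext; intros; f_equal; lia).
  rewrite IH. simpl. replace (m - 0 - 0)%nat with m by lia. lra.
Qed.

Lemma rsum_mono f a b : (a <= b)%nat -> (forall k, 0 <= f k) -> rsum f a <= rsum f b.
Proof.
  intros Hab H. replace b with (a + (b - a))%nat by lia. rewrite rsum_app.
  assert (0 <= rsum (fun k => f (a + k)%nat) (b - a)) by (apply rsum_nonneg; auto). lra.
Qed.

Lemma rsum_mul2 f M : rsum f (2 * M) = rsum (fun t => f (2 * t)%nat + f (2 * t + 1)%nat) M.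
Proof.
  induction M; [reflexivity|]. replace (2 * S M)%nat with (2 * M + 2)%nat by lia.
  rewrite rsum_app, IHM. simpl. rewrite !Nat.add_0_r.
  replace (2 * M)%nat with (M + (M + 0))%nat by lia. simpl. lra.
Qed.

Lemma rsum_mul3 f M :
  rsum f (3 * M) = rsum (fun t => f (3 * t)%nat + f (3 * t + 1)%nat + f (3 * t + 2)%nat) M.
Proof.
  induction M; [reflexivity|]. replace (3 * S M)%nat with (3 * M + 3)%nat by lia.
  rewrite rsum_app, IHM. simpl. rewrite !Nat.add_0_r.
  replace (3 * M)%nat with (M + (M + (M + 0)))%nat by lia. simpl. lra.
Qed.

Ltac elim_div_mod x k :=
  pose proof (Nat.div_mod_eq x k); pose proof (Nat.mod_upper_bound x k ltac:(lia));
  generalize dependent (Nat.modulo x k); generalize dependent (Nat.div x k); intros.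

Ltac mod_lia :=
  repeat match goal with
  | |- context [Nat.modulo ?x ?k] => elim_div_mod x k
  | _ : context [Nat.modulo ?x ?k] |- _ => elim_div_mod x k
  | |- context [Nat.div ?x ?k] => elim_div_mod x k
  | _ : context [Nat.div ?x ?k] |- _ => elim_div_mod x k
  end; lia.

(** * An upper bound for the sum of 1/q^2 over q coprime to 6 *)

(* Hofbauer's proof of the Basel bound: the duplication formula
   csc^2 y = (csc^2 (y/2) + csc^2 (pi/2 - y/2)) / 4 gives
   sum_(k < 2^n) csc^2 ((2k+1) pi / 2^(n+2)) = 2 * 4^n, and csc^2 y >= 1/y^2. *)
Definition csc2 (y : R) : R := / (sin y) ^ 2.

Definition node (n k : nat) : R := INR (2 * k + 1) * PI / 2 ^ (n + 2).

Definition csc2_node_sum (n : nat) : R := rsum (fun k => csc2 (node n k)) (2 ^ n).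

Lemma node_range n k : (k < 2 ^ n)%nat -> 0 < node n k < PI / 2.
Proof.
  intros Hk. unfold node. pose proof PI_RGT_0.
  assert (H1 : INR (2 * k + 1) < 2 ^ (n + 1)).
  { rewrite <- (pow_INR 2). apply lt_INR. rewrite Nat.pow_add_r. simpl. lia. }
  assert (H2 : 0 < INR (2 * k + 1)) by (apply lt_0_INR; lia).
  assert (E : 2 ^ (n + 2) = 2 ^ (n + 1) * 2)
    by (replace (n + 2)%nat with (S (n + 1)) by lia; simpl; lra).
  assert (0 < 2 ^ (n + 1)) by (apply pow_lt; lra).
  split.
  - apply Rmult_lt_0_compat; [nra|]. apply Rinv_0_lt_compat, pow_lt; lra.
  - rewrite E. unfold Rdiv. rewrite Rinv_mult.
    apply Rmult_lt_reg_r with (2 ^ (n + 1) * 2); [nra|].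
    field_simplify; [|lra]. nra.
Qed.

Lemma csc2_duplication y :
  0 < y < PI -> csc2 y = / 4 * (csc2 (y / 2) + csc2 (PI / 2 - y / 2)).
Proof.
  intros [H1 H2]. unfold csc2. rewrite sin_shift.
  assert (Hs : 0 < sin (y / 2)) by (apply sin_gt_0; lra).
  assert (Hc : 0 < cos (y / 2)) by (apply cos_gt_0; lra).
  assert (Hsc : sin (y / 2) ^ 2 + cos (y / 2) ^ 2 = 1)
    by (pose proof (sin2_cos2 (y / 2)); unfold Rsqr in *; lra).
  replace y with (2 * (y / 2)) at 1 by field. rewrite sin_2a.
  transitivity ((sin (y / 2) ^ 2 + cos (y / 2) ^ 2) / (4 * sin (y / 2) ^ 2 * cos (y / 2) ^ 2)).
  - rewrite Hsc. field. split; lra.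
  - field. split; lra.
Qed.

Lemma node_S n k : node (S n) k = node n k / 2.
Proof.
  unfold node. replace (S n + 2)%nat with (S (n + 2)) by lia. simpl pow.
  field. apply pow_nonzero. lra.
Qed.

Lemma node_S_rev n k :
  (k < 2 ^ n)%nat -> node (S n) (2 ^ S n - 1 - k) = PI / 2 - node n k / 2.
Proof.
  intros Hk. unfold node.
  assert (E : (2 * (2 ^ S n - 1 - k) + 1 + (2 * k + 1) = 2 ^ (n + 2))%nat).
  { replace (n + 2)%nat with (S (S n)) by lia. simpl. simpl in Hk. lia. }
  assert (E2 : INR (2 * (2 ^ S n - 1 - k) + 1) = 2 ^ (n + 2) - INR (2 * k + 1)).
  { replace (2 ^ (n + 2)) with (INR (2 ^ (n + 2))) by (rewrite pow_INR; reflexivity).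
    rewrite <- E, (plus_INR (2 * (2 ^ S n - 1 - k) + 1)). lra. }
  rewrite E2. replace (S n + 2)%nat with (S (n + 2)) by lia. simpl pow.
  field. apply pow_nonzero. lra.
Qed.

Lemma csc2_node_sum_S n : csc2_node_sum (S n) = 4 * csc2_node_sum n.
Proof.
  unfold csc2_node_sum. replace (2 ^ S n)%nat with (2 ^ n + 2 ^ n)%nat by (simpl; lia).
  rewrite rsum_app, <- (rsum_rev (fun k => csc2 (node (S n) (2 ^ n + k)))).
  rewrite <- rsum_plus, <- rsum_scal. apply rsum_ext. intros k Hk.
  replace (2 ^ n + (2 ^ n - 1 - k))%nat with (2 ^ S n - 1 - k)%nat by (simpl; lia).
  rewrite node_S_rev, node_S by assumption.
  pose proof (node_range n k Hk). rewrite (csc2_duplication (node n k)) by lra. field.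
Qed.

Lemma csc2_node_sum_0 : csc2_node_sum 0 = 2.
Proof.
  unfold csc2_node_sum, node, csc2. simpl.
  replace (1 * PI / (2 * (2 * 1))) with (PI / 4) by field. rewrite sin_PI4.
  assert (0 < sqrt 2) by (apply sqrt_lt_R0; lra).
  field_simplify; [|lra]. simpl. rewrite Rmult_1_r. apply sqrt_sqrt. lra.
Qed.

Lemma csc2_node_sum_eq n : csc2_node_sum n = 2 * (2 ^ n) ^ 2.
Proof.
  induction n.
  - rewrite csc2_node_sum_0. simpl. lra.
  - rewrite csc2_node_sum_S, IHn. simpl pow. ring.
Qed.

Lemma inv_sq_le_csc2 y : 0 < y < PI -> / y ^ 2 <= csc2 y.
Proof.
  intros [H1 H2]. unfold csc2.
  assert (0 < sin y) by (apply sin_gt_0; lra).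
  assert (sin y < y) by (apply sin_lt_x; lra).
  apply Rinv_le_contravar; [apply pow_lt; lra|]. nra.
Qed.

Lemma inv_sq_nonneg q : 0 <= / INR q ^ 2.
Proof.
  destruct q. { simpl. rewrite Rmult_0_l, Rinv_0. lra. }
  left. apply Rinv_0_lt_compat, pow_lt, lt_0_INR. lia.
Qed.

Lemma sum_inv_odd_sq_pow2_le n : rsum (fun k => / INR (2 * k + 1) ^ 2) (2 ^ n) <= PI ^ 2 / 8.
Proof.
  pose proof PI_RGT_0.
  assert (0 < 2 ^ n) by (apply pow_lt; lra).
  set (c := 16 * (2 ^ n) ^ 2 / PI ^ 2).
  assert (Hc : 0 < c) by (apply Rdiv_lt_0_compat; nra).
  assert (Hsum : c * rsum (fun k => / INR (2 * k + 1) ^ 2) (2 ^ n) <= csc2_node_sum n).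
  { rewrite <- rsum_scal. apply rsum_le. intros k Hk.
    pose proof (node_range n k Hk). eapply Rle_trans; [|apply inv_sq_le_csc2; lra].
    right. unfold node, c. assert (0 < INR (2 * k + 1)) by (apply lt_0_INR; lia).
    replace (n + 2)%nat with (S (S n)) by lia. rewrite <- !tech_pow_Rmult. field. repeat split; lra. }
  rewrite csc2_node_sum_eq in Hsum.
  apply Rmult_le_reg_l with c; [exact Hc|].
  replace (c * (PI ^ 2 / 8)) with (2 * (2 ^ n) ^ 2) by (unfold c; field; lra). exact Hsum.
Qed.

Lemma sum_inv_odd_sq_le K : rsum (fun k => / INR (2 * k + 1) ^ 2) K <= PI ^ 2 / 8.
Proof.
  eapply Rle_trans; [|apply (sum_inv_odd_sq_pow2_le K)]. apply rsum_mono.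
  - apply Nat.lt_le_incl, Nat.pow_gt_lin_r; lia.
  - intros k. apply inv_sq_nonneg.
Qed.

Definition coprime6b (q : nat) : bool := ((q mod 2 =? 1) && negb (q mod 3 =? 0))%nat.

(* The moduli q of the square parts q^2 of non-squarefree integers in a class c outside Q. *)
Definition admissible (q : nat) : bool := ((2 <=? q)%nat && coprime6b q)%bool.

Definition inv_sq_if (p : nat -> bool) (q : nat) : R := if p q then / INR q ^ 2 else 0.

Lemma inv_sq_if_nonneg p q : 0 <= inv_sq_if p q.
Proof. unfold inv_sq_if. destruct (p q); [apply inv_sq_nonneg|lra]. Qed.

Lemma sum_inv_sq_odd_le M : rsum (inv_sq_if (fun q => q mod 2 =? 1)%nat) M <= PI ^ 2 / 8.
Proof.
  apply Rle_trans with (rsum (inv_sq_if (fun q => q mod 2 =? 1)%nat) (2 * M)).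
  { apply rsum_mono; [lia|apply inv_sq_if_nonneg]. }
  rewrite rsum_mul2. eapply Rle_trans; [|apply (sum_inv_odd_sq_le M)].
  right. apply rsum_ext. intros t _. unfold inv_sq_if.
  replace ((2 * t) mod 2)%nat with 0%nat by mod_lia.
  replace ((2 * t + 1) mod 2)%nat with 1%nat by mod_lia. simpl. lra.
Qed.

Lemma sum_inv_sq_odd_mul3 M :
  rsum (inv_sq_if (fun q => q mod 2 =? 1)%nat) (3 * M)
  = rsum (inv_sq_if coprime6b) (3 * M) + / 9 * rsum (inv_sq_if (fun q => q mod 2 =? 1)%nat) M.
Proof.
  rewrite !rsum_mul3, <- rsum_scal, <- rsum_plus. apply rsum_ext. intros t _.
  unfold inv_sq_if, coprime6b.
  replace ((3 * t) mod 3)%nat with 0%nat by mod_lia.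
  replace ((3 * t + 1) mod 3)%nat with 1%nat by mod_lia.
  replace ((3 * t + 2) mod 3)%nat with 2%nat by mod_lia.
  replace ((3 * t) mod 2)%nat with (t mod 2)%nat by mod_lia.
  simpl (negb _). rewrite !andb_true_r, !andb_false_r.
  destruct (t mod 2 =? 1)%nat eqn:Et; [|lra].
  apply Nat.eqb_eq in Et. assert (t <> 0%nat) by (intro; subst; simpl in Et; lia).
  rewrite mult_INR. simpl (INR 3). assert (0 < INR t) by (apply lt_0_INR; lia).
  field. lra.
Qed.

Lemma sum_inv_sq_coprime6_geometric j K :
  rsum (inv_sq_if coprime6b) K * (9 / 8) * (1 - (/ 9) ^ S j)
  <= rsum (inv_sq_if (fun q => q mod 2 =? 1)%nat) (3 ^ j * K).
Proof.
  induction j.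
  - rewrite Nat.pow_0_r, Nat.mul_1_l, pow_1.
    replace (rsum (inv_sq_if coprime6b) K * (9 / 8) * (1 - / 9))
      with (rsum (inv_sq_if coprime6b) K) by field.
    apply rsum_le. intros q _. unfold inv_sq_if, coprime6b.
    destruct (q mod 2 =? 1)%nat; cbn [andb]; [|lra].
    destruct (negb _); [lra|apply inv_sq_nonneg].
  - replace (3 ^ S j * K)%nat with (3 * (3 ^ j * K))%nat by (simpl; lia).
    rewrite sum_inv_sq_odd_mul3.
    assert (rsum (inv_sq_if coprime6b) K <= rsum (inv_sq_if coprime6b) (3 * (3 ^ j * K))).
    { apply rsum_mono; [|apply inv_sq_if_nonneg].
      assert (1 <= 3 ^ j)%nat by (apply Nat.neq_0_lt_0, Nat.pow_nonzero; lia). nia. }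
    replace (rsum (inv_sq_if coprime6b) K * (9 / 8) * (1 - (/ 9) ^ S (S j))) with
      (rsum (inv_sq_if coprime6b) K + / 9 * (rsum (inv_sq_if coprime6b) K * (9 / 8) * (1 - (/ 9) ^ S j)))
      by (simpl; field).
    lra.
Qed.

Lemma PI_gt_3 : 3 < PI.
Proof. pose proof PI2_3_2. lra. Qed.

Lemma sum_inv_sq_coprime6_le K : rsum (inv_sq_if coprime6b) K <= PI ^ 2 / 9.
Proof.
  set (s := rsum (inv_sq_if coprime6b) K).
  destruct (Rle_or_lt s (PI ^ 2 / 9)) as [H|H]; [exact H|exfalso].
  pose proof PI_gt_3.
  assert (Hs : 0 < s) by nra.
  set (d := (s - PI ^ 2 / 9) / s).
  assert (Hd : 0 < d) by (apply Rdiv_lt_0_compat; lra).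
  assert (Hr : Rabs (/ 9) < 1) by (rewrite Rabs_right; lra).
  destruct (pow_lt_1_zero (/ 9) Hr d Hd) as [N HN].
  specialize (HN (S N) ltac:(lia)). rewrite Rabs_right in HN by (left; apply pow_lt; lra).
  pose proof (sum_inv_sq_coprime6_geometric N K) as G.
  pose proof (sum_inv_sq_odd_le (3 ^ N * K)) as B. fold s in G.
  assert (s * (1 - (/ 9) ^ S N) > s * (1 - d)) by (apply Rmult_lt_compat_l; lra).
  assert (s * (1 - d) = PI ^ 2 / 9) by (unfold d; field; lra).
  nra.
Qed.

Lemma sum_inv_sq_admissible_le K : rsum (inv_sq_if admissible) K <= PI ^ 2 / 9 - 1.
Proof.
  apply Rle_trans with (rsum (inv_sq_if admissible) (S (S K))).
  { apply rsum_mono; [lia|apply inv_sq_if_nonneg]. }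
  assert (E : rsum (inv_sq_if coprime6b) (S (S K)) = 1 + rsum (inv_sq_if admissible) (S (S K))).
  { induction K.
    - simpl. unfold inv_sq_if. simpl. field.
    - change (rsum (inv_sq_if coprime6b) (S (S (S K))))
        with (rsum (inv_sq_if coprime6b) (S (S K)) + inv_sq_if coprime6b (S (S K))).
      change (rsum (inv_sq_if admissible) (S (S (S K))))
        with (rsum (inv_sq_if admissible) (S (S K)) + inv_sq_if admissible (S (S K))).
      replace (inv_sq_if admissible (S (S K))) with (inv_sq_if coprime6b (S (S K))) by reflexivity.
      rewrite IHK. lra. }
  pose proof (sum_inv_sq_coprime6_le (S (S K))). lra.
Qed.

(* T = sum of 1/q^2 over the admissible q, as the supremum of its partial sums. *)
Definition T_partial_sums (t : R) : Prop := exists K, t = rsum (inv_sq_if admissible) K.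

Lemma T_partial_sums_bound : bound T_partial_sums.
Proof. exists (PI ^ 2 / 9 - 1). intros t [K ->]. apply sum_inv_sq_admissible_le. Qed.

Definition Tsum : R :=
  proj1_sig (completeness T_partial_sums T_partial_sums_bound (ex_intro _ 0 (ex_intro _ 0%nat eq_refl))).

Lemma Tsum_lub : is_lub T_partial_sums Tsum.
Proof. unfold Tsum. destruct (completeness _ _ _) as [t Ht]. exact Ht. Qed.

Lemma rsum_admissible_le_Tsum K : rsum (inv_sq_if admissible) K <= Tsum.
Proof. apply (proj1 Tsum_lub). exists K. reflexivity. Qed.

Lemma Tsum_approx d : 0 < d -> exists K, Tsum - d < rsum (inv_sq_if admissible) K.
Proof.
  intros Hd. apply NNPP. intros H.
  assert (Tsum <= Tsum - d); [|lra].
  apply (proj2 Tsum_lub). intros t [K ->]. apply Rnot_lt_le. intros Ht. apply H. eauto.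
Qed.

Lemma Tsum_le : Tsum <= PI ^ 2 / 9 - 1.
Proof. apply (proj2 Tsum_lub). intros t [K ->]. apply sum_inv_sq_admissible_le. Qed.

Lemma Tsum_ge0 : 0 <= Tsum.
Proof. apply (rsum_admissible_le_Tsum 0). Qed.

Lemma Tsum_lt1 : Tsum < 1.
Proof. pose proof Tsum_le. pose proof PI_4. pose proof PI_RGT_0. nra. Qed.

(** * Squarefree decomposition *)

Section Squarefree.
Local Open Scope nat_scope.

Definition squarefreeb (n : nat) : bool :=
  (1 <=? n) && forallb (fun d => negb (n mod (d * d) =? 0)) (seq 2 n).

Lemma squarefreeb_iff n : squarefreeb n = true <-> squarefree n.
Proof.
  unfold squarefreeb, squarefree. split.
  - intros H. apply andb_prop in H as [H1 H2]. apply Nat.leb_le in H1. split; [exact H1|].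
    intros d Hd. destruct d as [|[|d]].
    + destruct Hd as [z Hz]. lia.
    + reflexivity.
    + exfalso. assert (Hle : S (S d) * S (S d) <= n) by (apply Nat.divide_pos_le; [lia|exact Hd]).
      rewrite forallb_forall in H2.
      specialize (H2 (S (S d)) ltac:(apply in_seq; nia)).
      apply negb_true_iff, Nat.eqb_neq in H2. apply H2, Nat.Lcm0.mod_divide, Hd.
  - intros [H1 H2]. apply andb_true_intro. split; [apply Nat.leb_le; exact H1|].
    apply forallb_forall. intros d Hd. apply in_seq in Hd. apply negb_true_iff, Nat.eqb_neq.
    intros E. apply Nat.Lcm0.mod_divide, H2 in E. lia.
Qed.

Lemma not_squarefree_square_divisor n :
  1 <= n -> ~ squarefree n -> exists d, 2 <= d /\ Nat.divide (d * d) n.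
Proof.
  intros H1 H. apply NNPP. intros Hno. apply H. split; [exact H1|].
  intros d Hd. destruct d as [|[|d]]; [destruct Hd as [z Hz]; lia|reflexivity|].
  exfalso. apply Hno. exists (S (S d)). split; [lia|exact Hd].
Qed.

Lemma square_times_squarefree n : 1 <= n -> exists q s, 1 <= q /\ squarefree s /\ n = q * q * s.
Proof.
  induction n as [n IH] using (well_founded_induction lt_wf). intros Hn.
  destruct (classic (squarefree n)) as [Hs|Hs].
  - exists 1, n. split; [lia|]. split; [exact Hs|lia].
  - destruct (not_squarefree_square_divisor n Hn Hs) as [d [Hd [z Hz]]].
    assert (Hz1 : 1 <= z) by (destruct z; simpl in Hz; lia).
    assert (Hd4 : 4 <= d * d) by nia.
    assert (Hzn : z < n) by nia.
    destruct (IH z Hzn Hz1) as [q [s [Hq [Hs' Ez]]]].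
    exists (d * q), s. split; [nia|]. split; [exact Hs'|]. subst. nia.
Qed.

(* x^2 u = y^2 v with x, y coprime forces x^2 | v, so x = 1 when v is squarefree. *)
Lemma coprime_square_divides_squarefree x y u v :
  1 <= x -> Nat.gcd x y = 1 -> squarefree v -> x * x * u = y * y * v -> x = 1.
Proof.
  intros Hx Hxy Hv Exy.
  assert (D1 : Nat.divide x v).
  { apply (Nat.gauss x y v); [|exact Hxy]. apply (Nat.gauss x y (y * v)); [|exact Hxy].
    exists (x * u). nia. }
  destruct D1 as [t Ht]. subst v.
  assert (E3 : x * u = y * y * t) by (apply (Nat.mul_cancel_l _ _ x); [lia|]; nia).
  assert (D2 : Nat.divide x t).
  { apply (Nat.gauss x y t); [|exact Hxy]. apply (Nat.gauss x y (y * t)); [|exact Hxy].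
    exists u. nia. }
  destruct D2 as [t' Ht']. subst t.
  destruct Hv as [_ Hv]. apply Hv. exists t'. nia.
Qed.

Lemma square_part_unique q s q' s' : 1 <= q -> 1 <= q' -> squarefree s -> squarefree s' ->
  q * q * s = q' * q' * s' -> q = q'.
Proof.
  intros Hq Hq' Hs Hs' E.
  set (g := Nat.gcd q q').
  assert (Hg : g <> 0) by (unfold g; intro H; apply Nat.gcd_eq_0 in H; lia).
  destruct (Nat.gcd_divide_l q q') as [a Ha]. destruct (Nat.gcd_divide_r q q') as [a' Ha'].
  fold g in Ha, Ha'.
  assert (Hco : Nat.gcd a a' = 1).
  { replace a with (q / g) by (rewrite Ha; apply Nat.div_mul; exact Hg).
    replace a' with (q' / g) by (rewrite Ha'; apply Nat.div_mul; exact Hg).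
    apply Nat.gcd_div_gcd; [exact Hg|reflexivity]. }
  assert (E2 : a * a * s = a' * a' * s').
  { apply (Nat.mul_cancel_l _ _ (g * g)); [nia|]. rewrite Ha, Ha' in E. nia. }
  assert (Ea : a = 1)
    by (apply (coprime_square_divides_squarefree a a' s s'); [destruct a; nia|exact Hco|exact Hs'|exact E2]).
  assert (Ea' : a' = 1).
  { apply (coprime_square_divides_squarefree a' a s' s); [destruct a'; nia|rewrite Nat.gcd_comm; exact Hco|exact Hs|lia]. }
  rewrite Ha, Ha', Ea, Ea'. reflexivity.
Qed.

End Squarefree.

(** * Residues modulo 36 *)

Section Residues.
Local Open Scope nat_scope.

(* Membership in the set Q of residues mod 36 containing no squarefree integer. *)
Definition inQ (c : nat) : bool := (c mod 4 =? 0) || (c mod 9 =? 0).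

(* For q coprime to 6, q^2 is 1, 13 or 25 mod 36, and 13 * 25 = 1 mod 36. *)
Definition inv_sq_mod36 (v : nat) : nat := if v =? 13 then 25 else if v =? 25 then 13 else 1.

Definition cofactor_class (c q : nat) : nat := (c * inv_sq_mod36 ((q * q) mod 36)) mod 36.

Lemma in_seq36 r : r < 36 -> In r (seq 0 36).
Proof. intros; apply in_seq; lia. Qed.

Lemma sq_mod36_coprime6 q : coprime6b q = true ->
  (q * q) mod 36 = 1 \/ (q * q) mod 36 = 13 \/ (q * q) mod 36 = 25.
Proof.
  intros Hq. rewrite Nat.Div0.mul_mod.
  assert (Hr : coprime6b (q mod 36) = true).
  { unfold coprime6b in *.
    replace ((q mod 36) mod 2) with (q mod 2) by mod_lia.
    replace ((q mod 36) mod 3) with (q mod 3) by mod_lia. exact Hq. }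
  assert (Hcheck : forallb (fun r => implb (coprime6b r)
            (let v := (r * r) mod 36 in (v =? 1) || (v =? 13) || (v =? 25))) (seq 0 36) = true)
    by (vm_compute; reflexivity).
  rewrite forallb_forall in Hcheck.
  specialize (Hcheck _ (in_seq36 _ (Nat.mod_upper_bound q 36 ltac:(lia)))).
  rewrite Hr in Hcheck. cbn [implb] in Hcheck.
  rewrite !orb_true_iff, !Nat.eqb_eq in Hcheck. tauto.
Qed.

Lemma cofactor_class_spec q s c : coprime6b q = true -> c < 36 ->
  (s mod 36 = cofactor_class c q <-> (q * q * s) mod 36 = c).
Proof.
  intros Hq Hc. unfold cofactor_class. rewrite (Nat.Div0.mul_mod (q * q) s).
  set (v := (q * q) mod 36). set (r := s mod 36).
  assert (Hv : In v [1; 13; 25])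
    by (destruct (sq_mod36_coprime6 q Hq) as [E|[E|E]]; unfold v; rewrite E; simpl; tauto).
  assert (Hr : In r (seq 0 36)) by (apply in_seq36, Nat.mod_upper_bound; lia).
  assert (Hcheck : forallb (fun v => forallb (fun r => forallb (fun c =>
            Bool.eqb (r =? (c * inv_sq_mod36 v) mod 36) ((v * r) mod 36 =? c))
            (seq 0 36)) (seq 0 36)) [1; 13; 25] = true)
    by (vm_compute; reflexivity).
  rewrite forallb_forall in Hcheck. specialize (Hcheck v Hv).
  rewrite forallb_forall in Hcheck. specialize (Hcheck r Hr).
  rewrite forallb_forall in Hcheck. specialize (Hcheck c (in_seq36 c Hc)).
  apply eqb_prop in Hcheck. rewrite <- !Nat.eqb_eq, Hcheck. tauto.
Qed.

Lemma cofactor_class_notQ q c : coprime6b q = true -> c < 36 -> inQ c = false ->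
  inQ (cofactor_class c q) = false /\ cofactor_class c q < 36.
Proof.
  intros Hq Hc HQ. split; [|apply Nat.mod_upper_bound; lia].
  assert (Hv : In ((q * q) mod 36) [1; 13; 25])
    by (destruct (sq_mod36_coprime6 q Hq) as [E|[E|E]]; rewrite E; simpl; tauto).
  assert (Hcheck : forallb (fun v => forallb (fun c =>
            implb (negb (inQ c)) (negb (inQ ((c * inv_sq_mod36 v) mod 36))))
            (seq 0 36)) [1; 13; 25] = true)
    by (vm_compute; reflexivity).
  rewrite forallb_forall in Hcheck. specialize (Hcheck _ Hv).
  rewrite forallb_forall in Hcheck. specialize (Hcheck c (in_seq36 c Hc)).
  rewrite HQ in Hcheck. apply negb_true_iff in Hcheck. exact Hcheck.
Qed.

Lemma inQ_of_divide4 n : Nat.divide 4 n -> inQ (n mod 36) = true.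
Proof. intros [z ->]. unfold inQ. apply orb_true_intro. left. apply Nat.eqb_eq. mod_lia. Qed.

Lemma inQ_of_divide9 n : Nat.divide 9 n -> inQ (n mod 36) = true.
Proof. intros [z ->]. unfold inQ. apply orb_true_intro. right. apply Nat.eqb_eq. mod_lia. Qed.

End Residues.

(** * Counting squarefree integers in a residue class *)

Section Counting.
Local Open Scope nat_scope.

Definition count_upto (p : nat -> bool) (Z : nat) : nat := length (filter p (seq 1 Z)).

Lemma count_upto_S p Z : count_upto p (S Z) = count_upto p Z + (if p (S Z) then 1 else 0).
Proof.
  unfold count_upto. rewrite seq_S, filter_app, length_app. simpl. destruct (p (S Z)); reflexivity.
Qed.

Lemma count_upto_le p Z : count_upto p Z <= Z.
Proof. unfold count_upto. eapply Nat.le_trans; [apply filter_length_le|]; rewrite length_seq; lia. Qed.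

Lemma count_upto_add p b N :
  count_upto p (b + N) = count_upto p b + length (filter p (seq (S b) N)).
Proof. unfold count_upto. rewrite seq_app, filter_app, length_app. reflexivity. Qed.

Definition sqf_in (c m : nat) : bool := (m mod 36 =? c) && squarefreeb m.
Definition nonsqf_in (c m : nat) : bool := (m mod 36 =? c) && negb (squarefreeb m).

Definition sqf_count (c Z : nat) : nat := count_upto (sqf_in c) Z.
Definition nonsqf_count (c Z : nat) : nat := count_upto (nonsqf_in c) Z.

Lemma sqf_nonsqf_count c Z :
  sqf_count c Z + nonsqf_count c Z = count_upto (fun m => m mod 36 =? c) Z.
Proof.
  unfold sqf_count, nonsqf_count. induction Z; [reflexivity|]. rewrite !count_upto_S.
  unfold sqf_in, nonsqf_in in *.
  destruct (S Z mod 36 =? c); destruct (squarefreeb (S Z)); cbn [andb negb]; lia.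
Qed.

Lemma class_count_bounds c Z : c < 36 ->
  36 * count_upto (fun m => m mod 36 =? c) Z <= Z + 35 /\
  Z <= 36 * count_upto (fun m => m mod 36 =? c) Z + 35.
Proof.
  intros Hc.
  assert (E : count_upto (fun m => m mod 36 =? c) Z = (Z + (36 - c) mod 36) / 36).
  { induction Z; [change (count_upto (fun m => m mod 36 =? c) 0) with 0; mod_lia|].
    rewrite count_upto_S, IHZ. destruct (S Z mod 36 =? c) eqn:E.
    - apply Nat.eqb_eq in E. mod_lia.
    - apply Nat.eqb_neq in E. mod_lia. }
  rewrite E. mod_lia.
Qed.

Lemma div_succ k Z : 1 <= k -> S Z / k = Z / k + (if S Z mod k =? 0 then 1 else 0).
Proof.
  intros Hk.
  pose proof (Nat.div_mod_eq (S Z) k) as E1. pose proof (Nat.mod_upper_bound (S Z) k ltac:(lia)).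
  destruct (S Z mod k =? 0) eqn:E.
  - apply Nat.eqb_eq in E. rewrite E in E1.
    assert (1 <= S Z / k) by (destruct (S Z / k); nia).
    enough (Z / k = S Z / k - 1) by lia.
    symmetry; apply (Nat.div_unique Z k (S Z / k - 1) (k - 1)); [lia|]. nia.
  - apply Nat.eqb_neq in E. rewrite Nat.add_0_r.
    apply (Nat.div_unique Z k (S Z / k) (S Z mod k - 1)); lia.
Qed.

Lemma length_filter_unique {A} (p : A -> bool) l q :
  NoDup l -> In q l -> p q = true -> (forall x, In x l -> p x = true -> x = q) ->
  length (filter p l) = 1.
Proof.
  intros Hn Hq Hpq Hall.
  assert (Hin : In q (filter p l)) by (apply filter_In; auto).
  assert (length (filter p l) <= length [q]).
  { apply NoDup_incl_length; [apply NoDup_filter, Hn|]. intros x Hx.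
    apply filter_In in Hx as [Hx Hpx]. rewrite (Hall x Hx Hpx). simpl; auto. }
  destruct (filter p l); [destruct Hin|]. simpl in *. lia.
Qed.

Lemma nonsqf_class_decomp c n : inQ c = false -> n mod 36 = c -> 1 <= n -> ~ squarefree n ->
  exists q s, admissible q = true /\ squarefree s /\ n = q * q * s.
Proof.
  intros HQ Hc Hn Hns. destruct (square_times_squarefree n Hn) as [q [s [Hq [Hs En]]]].
  exists q, s. split; [|tauto].
  assert (2 <= q).
  { destruct (Nat.eq_dec q 1) as [->|]; [|lia].
    exfalso. apply Hns. rewrite En, !Nat.mul_1_l. exact Hs. }
  assert (q mod 2 = 1).
  { destruct (Nat.eq_dec (q mod 2) 1) as [e|e]; [exact e|exfalso].
    assert (Nat.divide 4 n) by (exists ((q / 2) * (q / 2) * s); rewrite En; mod_lia).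
    rewrite <- Hc, inQ_of_divide4 in HQ by assumption. discriminate. }
  assert (q mod 3 <> 0).
  { intros e. assert (Nat.divide 9 n) by (exists ((q / 3) * (q / 3) * s); rewrite En; mod_lia).
    rewrite <- Hc, inQ_of_divide9 in HQ by assumption. discriminate. }
  unfold admissible, coprime6b. apply andb_true_intro. split; [apply Nat.leb_le; lia|].
  apply andb_true_intro. split; [apply Nat.eqb_eq; assumption|apply negb_true_iff, Nat.eqb_neq; assumption].
Qed.

End Counting.

Lemma admissible_spec q : admissible q = true -> (2 <= q)%nat /\ coprime6b q = true.
Proof. unfold admissible. intros H. apply andb_prop in H as [H1 H2]. apply Nat.leb_le in H1. tauto. Qed.

Lemma rsum_indicator (p : nat -> bool) n :
  rsum (fun k => if p k then 1 else 0) n = INR (length (filter p (seq 0 n))).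
Proof.
  induction n; [reflexivity|].
  rewrite seq_S, filter_app, length_app, plus_INR. simpl rsum. rewrite IHn. simpl.
  destruct (p n); simpl; lra.
Qed.

Definition divisor_term (c n q : nat) : bool :=
  (admissible q && ((n mod (q * q) =? 0) && sqf_in (cofactor_class c q) (n / (q * q))))%nat.

Lemma divisor_term_spec c n q : divisor_term c n q = true ->
  admissible q = true /\ n = (q * q * (n / (q * q)))%nat /\ squarefree (n / (q * q)) /\
  ((n / (q * q)) mod 36 = cofactor_class c q)%nat.
Proof.
  unfold divisor_term, sqf_in. intros H.
  apply andb_prop in H as [Hq H]. apply andb_prop in H as [Hd H]. apply andb_prop in H as [Hc Hs].
  apply Nat.eqb_eq in Hd, Hc. apply squarefreeb_iff in Hs.
  pose proof (admissible_spec q Hq).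
  split; [exact Hq|]. split; [|split; assumption]. pose proof (Nat.div_mod_eq n (q * q)). lia.
Qed.

(* A non-squarefree n in a class c outside Q is q^2 s, s squarefree, for exactly one
   admissible q, and then s lies in the class cofactor_class c q. *)
Lemma sum_divisor_term c n B : (c < 36)%nat -> inQ c = false -> (1 <= n <= B)%nat ->
  rsum (fun q => if divisor_term c n q then 1 else 0) (S B) = if nonsqf_in c n then 1 else 0.
Proof.
  intros Hc HQ Hn. rewrite rsum_indicator.
  destruct (nonsqf_in c n) eqn:EG; unfold nonsqf_in in EG.
  - apply andb_prop in EG as [E1 E2]. apply Nat.eqb_eq in E1. apply negb_true_iff in E2.
    assert (Hns : ~ squarefree n) by (rewrite <- squarefreeb_iff, E2; discriminate).
    destruct (nonsqf_class_decomp c n HQ E1 ltac:(lia) Hns) as [q [s [Hq [Hs En]]]].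
    destruct (admissible_spec q Hq) as [Hq2 Hq6].
    assert (Hdiv : (n / (q * q) = s)%nat)
      by (rewrite En, (Nat.mul_comm (q * q)); apply Nat.div_mul; nia).
    rewrite (length_filter_unique _ _ q); [reflexivity|apply seq_NoDup| | |].
    + apply in_seq. assert (q <= q * q * s)%nat by (destruct s; [destruct Hs; lia|nia]). lia.
    + unfold divisor_term, sqf_in. rewrite Hq, Hdiv.
      replace (n mod (q * q))%nat with 0%nat
        by (rewrite En, (Nat.mul_comm (q * q)); symmetry; apply Nat.Div0.mod_mul).
      replace (s mod 36 =? cofactor_class c q)%nat with true
        by (symmetry; apply Nat.eqb_eq, cofactor_class_spec; [exact Hq6|exact Hc|rewrite <- En; exact E1]).
      apply squarefreeb_iff in Hs. rewrite Hs. reflexivity.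
    + intros x _ Hx. destruct (divisor_term_spec c n x Hx) as [Hx2 [Ex [Hxs _]]].
      apply (square_part_unique x (n / (x * x)) q s);
        [pose proof (admissible_spec x Hx2); lia|lia|exact Hxs|exact Hs|lia].
  - rewrite (filter_ext_in (divisor_term c n) (fun _ => false)), filter_false; [reflexivity|].
    intros x _.
    destruct (divisor_term c n x) eqn:Ex; [exfalso|reflexivity].
    destruct (divisor_term_spec c n x Ex) as [Hx [Ex' [Hxs Hxc]]].
    destruct (admissible_spec x Hx) as [Hx2 Hx6].
    assert (Hnc : (n mod 36 = c)%nat) by (rewrite Ex'; apply cofactor_class_spec; assumption).
    assert (Hns : ~ squarefree n).
    { intros [_ Hsq]. assert (x = 1%nat) by (apply Hsq; exists (n / (x * x))%nat; lia). lia. }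
    rewrite Hnc, Nat.eqb_refl in EG. cbn [andb] in EG. apply negb_false_iff, squarefreeb_iff in EG.
    contradiction.
Qed.

Definition nonsqf_term (c Z q : nat) : R :=
  if admissible q then INR (sqf_count (cofactor_class c q) (Z / (q * q))) else 0.

Lemma nonsqf_count_recursion c Z B : (c < 36)%nat -> inQ c = false -> (Z <= B)%nat ->
  INR (nonsqf_count c Z) = rsum (nonsqf_term c Z) (S B).
Proof.
  intros Hc HQ. induction Z; intros HZ.
  - rewrite (rsum_ext _ (fun _ => 0)), rsum_const; [simpl; lra|].
    intros q _. unfold nonsqf_term. destruct (admissible q); [|reflexivity].
    rewrite Nat.Div0.div_0_l. reflexivity.
  - unfold nonsqf_count. rewrite count_upto_S, plus_INR. fold (nonsqf_count c Z).
    replace (INR (if nonsqf_in c (S Z) then 1 else 0)) with (if nonsqf_in c (S Z) then 1 else 0)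
      by (destruct (nonsqf_in c (S Z)); reflexivity).
    rewrite IHZ by lia. rewrite <- (sum_divisor_term c (S Z) B Hc HQ ltac:(lia)), <- rsum_plus.
    apply rsum_ext. intros q _. unfold nonsqf_term, divisor_term.
    destruct (admissible q) eqn:Eq; cbn [andb]; [|lra].
    destruct (admissible_spec q Eq) as [Hq _].
    rewrite (div_succ (q * q) Z) by nia.
    destruct (S Z mod (q * q) =? 0)%nat; cbn [andb]; rewrite ?Nat.add_0_r; [|lra].
    unfold sqf_count. rewrite Nat.add_1_r, count_upto_S, plus_INR.
    destruct (sqf_in _ _); simpl; lra.
Qed.

(** * The density of squarefree integers in a class outside Q *)

Lemma nat_above r : exists N : nat, r <= INR N.
Proof.
  destruct (archimed r) as [H1 H2].
  destruct (Z_le_gt_dec (up r) 0) as [Hz|Hz].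
  - exists 0%nat. simpl. apply IZR_le in Hz. lra.
  - exists (Z.to_nat (up r)). rewrite INR_IZR_INZ, Z2Nat.id by lia. lra.
Qed.

Lemma INR_div_bounds Z k : (1 <= k)%nat ->
  INR (Z / k) <= INR Z / INR k /\ INR Z / INR k - 1 <= INR (Z / k).
Proof.
  intros Hk. pose proof (Nat.div_mod_eq Z k) as E.
  pose proof (Nat.mod_upper_bound Z k ltac:(lia)) as B.
  assert (Hk' : 0 < INR k) by (apply lt_0_INR; lia).
  apply (f_equal INR) in E. rewrite plus_INR, mult_INR in E.
  apply lt_INR in B. pose proof (pos_INR (Z mod k)).
  split; apply Rmult_le_reg_l with (INR k); try lra; field_simplify; lra.
Qed.

Lemma INR_sq q : INR (q * q) = INR q ^ 2.
Proof. rewrite mult_INR. ring. Qed.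

Definition good_class (c : nat) : Prop := (c < 36)%nat /\ inQ c = false.

Lemma good_cofactor_class c q : good_class c -> admissible q = true -> good_class (cofactor_class c q).
Proof.
  intros [Hc HQ] Hq. destruct (admissible_spec q Hq) as [_ Hq6].
  destruct (cofactor_class_notQ q c Hq6 Hc HQ). split; assumption.
Qed.

Lemma sqf_nonsqf_count_R c Z : good_class c ->
  INR (sqf_count c Z) + INR (nonsqf_count c Z) <= (INR Z + 35) / 36 /\
  (INR Z - 35) / 36 <= INR (sqf_count c Z) + INR (nonsqf_count c Z).
Proof.
  intros [Hc _]. rewrite <- plus_INR, sqf_nonsqf_count.
  destruct (class_count_bounds c Z Hc) as [B1 B2].
  apply le_INR in B1, B2. rewrite mult_INR, plus_INR in B1. rewrite plus_INR, mult_INR in B2.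
  replace (INR 36) with 36 in * by (simpl; lra). replace (INR 35) with 35 in * by (simpl; lra).
  split; lra.
Qed.

Definition sqf_upper (a : R) : Prop :=
  forall d, 0 < d -> exists Z0 : nat, forall Z c, (Z0 <= Z)%nat -> good_class c ->
  INR (sqf_count c Z) <= (a + d) * INR Z / 36.

Definition sqf_lower (b : R) : Prop :=
  forall d, 0 < d -> exists Z0 : nat, forall Z c, (Z0 <= Z)%nat -> good_class c ->
  (b - d) * INR Z / 36 <= INR (sqf_count c Z).

Lemma sum_inv_sq_tail Q0 n : (1 <= Q0)%nat ->
  rsum (fun k => / INR (Q0 + 1 + k) ^ 2) n <= / INR Q0.
Proof.
  intros HQ. enough (rsum (fun k => / INR (Q0 + 1 + k) ^ 2) n <= / INR Q0 - / INR (Q0 + n)).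
  { assert (0 < / INR (Q0 + n)) by (apply Rinv_0_lt_compat, lt_0_INR; lia). lra. }
  induction n; cbn [rsum].
  - rewrite Nat.add_0_r. lra.
  - assert (1 <= INR (Q0 + n)) by (apply (le_INR 1); lia).
    replace (INR (Q0 + 1 + n)) with (INR (Q0 + n) + 1) by (rewrite <- S_INR; f_equal; lia).
    replace (INR (Q0 + S n)) with (INR (Q0 + n) + 1) by (rewrite <- S_INR; f_equal; lia).
    assert (/ (INR (Q0 + n) + 1) ^ 2 <= / INR (Q0 + n) - / (INR (Q0 + n) + 1)).
    { replace (/ INR (Q0 + n) - / (INR (Q0 + n) + 1)) with (/ (INR (Q0 + n) * (INR (Q0 + n) + 1)))
        by (field; lra).
      apply Rinv_le_contravar; nra. }
    lra.
Qed.

Lemma nonsqf_count_upper a Z0 Q0 Z c : 0 <= a -> (1 <= Q0)%nat ->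
  (Z0 * (Q0 * Q0) + Q0 <= Z)%nat -> good_class c ->
  (forall Z c, (Z0 <= Z)%nat -> good_class c -> INR (sqf_count c Z) <= a * INR Z / 36) ->
  INR (nonsqf_count c Z) <= a * INR Z / 36 * Tsum + INR Z * / INR Q0.
Proof.
  intros Ha HQ0 HZ Hc HU. pose proof (pos_INR Z). destruct Hc as [Hc36 HQ].
  rewrite (nonsqf_count_recursion c Z Z Hc36 HQ (le_n _)).
  replace (S Z) with (S Q0 + (Z - Q0))%nat by lia. rewrite rsum_app.
  apply Rplus_le_compat.
  - apply Rle_trans with (a * INR Z / 36 * rsum (inv_sq_if admissible) (S Q0)).
    + rewrite <- rsum_scal. apply rsum_le. intros q Hq. unfold nonsqf_term, inv_sq_if.
      destruct (admissible q) eqn:Eq; [|lra].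
      destruct (admissible_spec q Eq) as [Hq2 _].
      assert (HW : (Z0 <= Z / (q * q))%nat).
      { apply Nat.div_le_lower_bound; [nia|]. assert (q * q <= Q0 * Q0)%nat by nia. nia. }
      eapply Rle_trans; [apply (HU _ _ HW), good_cofactor_class; [split|]; assumption|].
      destruct (INR_div_bounds Z (q * q) ltac:(nia)) as [D _]. rewrite INR_sq in D.
      assert (0 < INR q) by (apply lt_0_INR; lia). assert (0 < INR q ^ 2) by (apply pow_lt; lra).
      replace (a * INR Z / 36 * / INR q ^ 2) with (a * (INR Z / INR q ^ 2) / 36) by (field; lra).
      apply Rmult_le_compat_r; [lra|]. apply Rmult_le_compat_l; [lra|exact D].
    + apply Rmult_le_compat_l; [|apply rsum_admissible_le_Tsum]. apply Rmult_le_pos; [apply Rmult_le_pos|]; lra.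
  - apply Rle_trans with (INR Z * rsum (fun k => / INR (Q0 + 1 + k) ^ 2) (Z - Q0)).
    + rewrite <- rsum_scal. apply rsum_le. intros k _. unfold nonsqf_term.
      destruct (admissible (S Q0 + k)).
      * eapply Rle_trans; [apply le_INR, count_upto_le|].
        destruct (INR_div_bounds Z ((S Q0 + k) * (S Q0 + k)) ltac:(nia)) as [D _].
        rewrite INR_sq in D. replace (Q0 + 1 + k)%nat with (S Q0 + k)%nat by lia. exact D.
      * apply Rmult_le_pos; [lra|apply inv_sq_nonneg].
    + apply Rmult_le_compat_l; [lra|]. apply sum_inv_sq_tail. exact HQ0.
Qed.

Lemma nonsqf_count_lower g Z0 K Z c : g <= 1 ->
  (Z0 * (K * K) + K <= Z)%nat -> good_class c ->
  (forall Z c, (Z0 <= Z)%nat -> good_class c -> g * INR Z / 36 <= INR (sqf_count c Z)) ->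
  g * INR Z / 36 * rsum (inv_sq_if admissible) K - INR K / 36 <= INR (nonsqf_count c Z).
Proof.
  intros Hg1 HZ Hc HL. pose proof (pos_INR Z). destruct Hc as [Hc36 HQ].
  rewrite (nonsqf_count_recursion c Z Z Hc36 HQ (le_n _)).
  apply Rle_trans with (rsum (nonsqf_term c Z) K).
  2:{ apply rsum_mono; [lia|]. intros q. unfold nonsqf_term.
      destruct (admissible q); [apply pos_INR|lra]. }
  replace (g * INR Z / 36 * rsum (inv_sq_if admissible) K - INR K / 36)
    with (rsum (fun q => g * INR Z / 36 * inv_sq_if admissible q + - / 36) K)
    by (rewrite rsum_plus, rsum_scal, rsum_const; lra).
  apply rsum_le. intros q Hq.
  unfold nonsqf_term, inv_sq_if. destruct (admissible q) eqn:Eq; [|lra].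
  destruct (admissible_spec q Eq) as [Hq2 _].
  assert (0 < INR q) by (apply lt_0_INR; lia). assert (0 < INR q ^ 2) by (apply pow_lt; lra).
  pose proof (pos_INR (sqf_count (cofactor_class c q) (Z / (q * q)))).
  destruct (Rle_or_lt 0 g) as [Hg|Hg].
  - assert (HW : (Z0 <= Z / (q * q))%nat).
    { apply Nat.div_le_lower_bound; [nia|]. assert (q * q <= K * K)%nat by nia. nia. }
    eapply Rle_trans; [|apply (HL _ _ HW), good_cofactor_class; [split|]; assumption].
    destruct (INR_div_bounds Z (q * q) ltac:(nia)) as [_ D]. rewrite INR_sq in D.
    replace (g * INR Z / 36 * / INR q ^ 2 + - / 36) with ((g * (INR Z / INR q ^ 2) - 1) / 36)
      by (field; lra).
    assert (g * (INR Z / INR q ^ 2 - 1) <= g * INR (Z / (q * q))) by (apply Rmult_le_compat_l; lra).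
    nra.
  - assert (0 <= INR Z / 36 * / INR q ^ 2)
      by (apply Rmult_le_pos; [lra|left; apply Rinv_0_lt_compat; lra]).
    nra.
Qed.

Lemma sqf_lower_of_upper a : 0 <= a -> sqf_upper a -> sqf_lower (1 - a * Tsum).
Proof.
  intros Ha HU d Hd.
  destruct (HU (d / 3) ltac:(lra)) as [Z0 HZ0].
  destruct (nat_above (108 / d)) as [Q1 HQ1].
  destruct (nat_above (105 / d)) as [Z1 HZ1].
  exists (Z0 * (S Q1 * S Q1) + S Q1 + Z1)%nat. intros Z c HZ Hc.
  pose proof (nonsqf_count_upper (a + d / 3) Z0 (S Q1) Z c ltac:(lra) ltac:(lia) ltac:(lia) Hc HZ0).
  destruct (sqf_nonsqf_count_R c Z Hc) as [_ B].
  pose proof Tsum_ge0. pose proof Tsum_lt1.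
  assert (HZ1' : 105 / d <= INR Z) by (apply Rle_trans with (INR Z1); [|apply le_INR]; lia || lra).
  assert (A1 : 35 <= d / 3 * INR Z).
  { apply Rmult_le_reg_l with (3 / d); [apply Rdiv_lt_0_compat; lra|].
    replace (3 / d * (d / 3 * INR Z)) with (INR Z) by (field; lra).
    replace (3 / d * 35) with (105 / d) by (field; lra). exact HZ1'. }
  assert (HinvQ : / INR (S Q1) <= d / 108).
  { rewrite S_INR. replace (d / 108) with (/ (108 / d)) by (field; lra).
    apply Rinv_le_contravar; [apply Rdiv_lt_0_compat|]; lra. }
  pose proof (pos_INR Z).
  assert (INR Z * / INR (S Q1) <= d / 108 * INR Z) by nra.
  assert (d / 3 * INR Z / 36 * Tsum <= d / 3 * INR Z / 36) by nra.
  nra.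
Qed.

Lemma sqf_upper_of_lower b : 0 <= b <= 1 -> sqf_lower b -> sqf_upper (1 - b * Tsum).
Proof.
  intros Hb HL d Hd.
  destruct (HL (d / 4) ltac:(lra)) as [Z0 HZ0].
  destruct (Tsum_approx (d / 4) ltac:(lra)) as [K HK].
  destruct (nat_above ((70 + 2 * INR K) / d)) as [Z1 HZ1].
  exists (Z0 * (K * K) + K + Z1)%nat. intros Z c HZ Hc.
  pose proof (nonsqf_count_lower (b - d / 4) Z0 K Z c ltac:(lra) ltac:(lia) Hc HZ0).
  destruct (sqf_nonsqf_count_R c Z Hc) as [B _].
  pose proof Tsum_ge0. pose proof Tsum_lt1. pose proof (pos_INR Z).
  set (S := rsum (inv_sq_if admissible) K) in *.
  assert (HS : S <= Tsum) by apply rsum_admissible_le_Tsum.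
  assert (0 <= S) by (apply rsum_nonneg; intros; apply inv_sq_if_nonneg).
  assert (HgS : b * Tsum - d / 2 <= (b - d / 4) * S) by nra.
  assert (HZ1' : (70 + 2 * INR K) / d <= INR Z)
    by (apply Rle_trans with (INR Z1); [|apply le_INR]; lia || lra).
  assert (A1 : 35 + INR K <= d / 2 * INR Z).
  { apply Rmult_le_reg_l with (2 / d); [apply Rdiv_lt_0_compat; lra|].
    replace (2 / d * (d / 2 * INR Z)) with (INR Z) by (field; lra).
    replace (2 / d * (35 + INR K)) with ((70 + 2 * INR K) / d) by (field; lra). exact HZ1'. }
  assert ((b * Tsum - d / 2) * INR Z <= (b - d / 4) * S * INR Z) by (apply Rmult_le_compat_r; lra).
  nra.
Qed.

(* The bounds a -> 1 - (1 - a T) T contract to the fixed point 1 / (1 + T). *)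
Definition sqf_density : R := / (1 + Tsum).

Lemma sqf_density_range : 1 / 2 < sqf_density <= 1 /\ 1 - Tsum * sqf_density = sqf_density.
Proof.
  pose proof Tsum_ge0. pose proof Tsum_lt1. unfold sqf_density. split; [split|].
  - apply Rmult_lt_reg_l with (1 + Tsum); [lra|]. field_simplify; lra.
  - apply Rmult_le_reg_l with (1 + Tsum); [lra|]. field_simplify; lra.
  - field. lra.
Qed.

Lemma pow_le1 x n : 0 <= x <= 1 -> 0 <= x ^ n <= 1.
Proof. intros H. induction n; simpl; [lra|]. split; nra. Qed.

Lemma sqf_upper_iter k : sqf_upper (sqf_density + Tsum ^ (2 * k) * (1 - sqf_density)).
Proof.
  pose proof Tsum_ge0. pose proof Tsum_lt1. destruct sqf_density_range as [[HL1 HL2] HL3].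
  induction k.
  - replace (sqf_density + Tsum ^ (2 * 0) * (1 - sqf_density)) with (1 - 0 * Tsum) by (simpl; ring).
    apply sqf_upper_of_lower; [lra|]. intros d Hd. exists 0%nat. intros Z c _ _.
    pose proof (pos_INR Z). pose proof (pos_INR (sqf_count c Z)). nra.
  - pose proof (pow_le1 Tsum (2 * k) ltac:(lra)).
    assert (0 <= Tsum ^ (2 * k) * (1 - sqf_density)) by (apply Rmult_le_pos; lra).
    apply sqf_lower_of_upper in IHk; [|lra].
    replace (sqf_density + Tsum ^ (2 * S k) * (1 - sqf_density))
      with (1 - (1 - (sqf_density + Tsum ^ (2 * k) * (1 - sqf_density)) * Tsum) * Tsum)
      by (replace (2 * S k)%nat with (S (S (2 * k))) by lia; simpl pow; unfold sqf_density; field; lra).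
    apply sqf_upper_of_lower; [split; nra|exact IHk].
Qed.

Lemma sqf_lower_iter k : sqf_lower (sqf_density - Tsum ^ (2 * k + 1) * (1 - sqf_density)).
Proof.
  pose proof Tsum_ge0. pose proof Tsum_lt1. destruct sqf_density_range as [[HL1 HL2] HL3].
  pose proof (pow_le1 Tsum (2 * k) ltac:(lra)).
  assert (0 <= Tsum ^ (2 * k) * (1 - sqf_density)) by (apply Rmult_le_pos; lra).
  replace (sqf_density - Tsum ^ (2 * k + 1) * (1 - sqf_density))
    with (1 - (sqf_density + Tsum ^ (2 * k) * (1 - sqf_density)) * Tsum)
    by (replace (2 * k + 1)%nat with (S (2 * k)) by lia; simpl pow; unfold sqf_density; field; lra).
  apply sqf_lower_of_upper; [lra|apply sqf_upper_iter].
Qed.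

Lemma sqf_density_limit eta : 0 < eta -> exists Z0 : nat, forall Z c, (Z0 <= Z)%nat -> good_class c ->
  (sqf_density - eta) * INR Z / 36 <= INR (sqf_count c Z) <= (sqf_density + eta) * INR Z / 36.
Proof.
  intros He. pose proof Tsum_ge0. pose proof Tsum_lt1. destruct sqf_density_range as [[HL1 HL2] HL3].
  destruct (pow_lt_1_zero Tsum ltac:(rewrite Rabs_right; lra) (eta / 2) ltac:(lra)) as [N HN].
  specialize (HN (2 * N)%nat ltac:(lia)). rewrite Rabs_right in HN by (apply Rle_ge, pow_le; lra).
  assert (Tsum ^ (2 * N + 1) <= Tsum ^ (2 * N)).
  { rewrite Nat.add_1_r, <- tech_pow_Rmult. pose proof (pow_le1 Tsum (2 * N) ltac:(lra)). nra. }
  destruct (sqf_upper_iter N (eta / 2) ltac:(lra)) as [Z1 HU].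
  destruct (sqf_lower_iter N (eta / 2) ltac:(lra)) as [Z2 HL].
  exists (Z1 + Z2)%nat. intros Z c HZ Hc.
  specialize (HU Z c ltac:(lia) Hc). specialize (HL Z c ltac:(lia) Hc).
  pose proof (pos_INR Z). pose proof (pow_le Tsum (2 * N + 1) ltac:(lra)).
  split.
  - eapply Rle_trans; [|exact HL]. apply Rmult_le_compat_r; [lra|]. apply Rmult_le_compat_r; [lra|]. nra.
  - eapply Rle_trans; [exact HU|]. apply Rmult_le_compat_r; [lra|]. apply Rmult_le_compat_r; [lra|]. nra.
Qed.

Lemma sqf_density_ge : 9 / PI ^ 2 <= sqf_density.
Proof.
  pose proof Tsum_ge0. pose proof Tsum_le. pose proof PI_gt_3. unfold sqf_density.
  replace (9 / PI ^ 2) with (/ (PI ^ 2 / 9)) by (field; nra).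
  apply Rinv_le_contravar; lra.
Qed.

Lemma nonsqf_interval_bound eps : 0 < eps -> exists N0 : nat, forall N b c,
  (N0 <= N)%nat -> (b <= N)%nat -> good_class c ->
  INR (nonsqf_count c (b + N)) - INR (nonsqf_count c b) <= (1 - 9 / PI ^ 2 + eps / 200) * INR N / 36.
Proof.
  intros He. set (eta := eps / 1200).
  destruct (sqf_density_limit eta ltac:(unfold eta; lra)) as [Z0 HD].
  destruct (nat_above (400 / eps * (70 + 36 * INR Z0))) as [N1 HN1].
  exists (Z0 + N1)%nat. intros N b c HN Hb Hc.
  pose proof sqf_density_ge. destruct sqf_density_range as [[HL1 HL2] _].
  destruct (sqf_nonsqf_count_R c (b + N) Hc) as [B1 _].
  destruct (sqf_nonsqf_count_R c b Hc) as [_ B2].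
  destruct (HD (b + N)%nat c ltac:(lia) Hc) as [D1 _].
  assert (D2 : INR (sqf_count c b) <= (sqf_density + eta) * INR b / 36 + INR Z0).
  { destruct (le_lt_dec Z0 b) as [h|h].
    - destruct (HD b c h Hc) as [_ D]. pose proof (pos_INR Z0). lra.
    - pose proof (le_INR _ _ (count_upto_le (sqf_in c) b)). apply lt_INR in h. pose proof (pos_INR b).
      assert (0 <= (sqf_density + eta) * INR b / 36)
        by (apply Rmult_le_pos; [apply Rmult_le_pos|]; unfold eta; lra).
      unfold sqf_count in *. lra. }
  rewrite plus_INR in *.
  assert (INR b <= INR N) by (apply le_INR; exact Hb).
  assert (HN' : 400 / eps * (70 + 36 * INR Z0) <= INR N)
    by (apply Rle_trans with (INR N1); [|apply le_INR]; lia || lra).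
  assert (70 + 36 * INR Z0 <= eps / 400 * INR N).
  { apply Rmult_le_reg_l with (400 / eps); [apply Rdiv_lt_0_compat; lra|].
    replace (400 / eps * (eps / 400 * INR N)) with (INR N) by (field; lra). exact HN'. }
  pose proof (pos_INR b). pose proof (pos_INR N). unfold eta in *.
  nra.
Qed.

(** * The translates u + A for u in U lie in Q *)

Lemma floor_nat x : 0 <= x -> exists N : nat, INR N <= x < INR N + 1.
Proof.
  intros Hx. destruct (archimed x) as [H1 H2].
  assert (Hz : (1 <= up x)%Z) by (apply Z.lt_pred_le, lt_IZR; simpl; lra).
  exists (Z.to_nat (up x - 1)). rewrite INR_IZR_INZ, Z2Nat.id by lia.
  rewrite minus_IZR. simpl. lra.
Qed.

Lemma nine_div_PI_sq_lt_1 : 9 / PI ^ 2 < 1.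
Proof.
  pose proof PI_gt_3. assert (9 < PI ^ 2) by nra.
  apply Rmult_lt_reg_r with (PI ^ 2); [nra|]. field_simplify; lra.
Qed.

Lemma translate_inQ eps N0 x (A : list nat) N u b :
  0 < eps ->
  (forall N b c, (N0 <= N)%nat -> (b <= N)%nat -> good_class c ->
     INR (nonsqf_count c (b + N)) - INR (nonsqf_count c b) <= (1 - 9 / PI ^ 2 + eps / 200) * INR N / 36) ->
  (N0 <= N)%nat -> (1 <= N)%nat -> INR N <= x ->
  NoDup A -> (forall n, In n A -> (1 <= n <= N)%nat) ->
  (forall a b, In a A -> In b A -> ~ squarefree (a + b)) ->
  inU eps x A u -> In b A -> inQ ((u + b) mod 36) = true.
Proof.
  intros He HNS HN0 HN1 HNx HA Hrange Hsq [Hu Hdel] Hb.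
  destruct (inQ ((u + b) mod 36)) eqn:EQ; [reflexivity|exfalso].
  set (c := ((u + b) mod 36)%nat) in *.
  assert (Hc : good_class c) by (split; [apply Nat.mod_upper_bound; lia|exact EQ]).
  set (Au := filter (fun n => (n mod 36 =? u)%nat) A).
  assert (Hlen : (length Au <= length (filter (nonsqf_in c) (seq (S b) N)))%nat).
  { rewrite <- (length_map (fun n => n + b)%nat Au). apply NoDup_incl_length.
    - apply NoDup_map_NoDup_ForallPairs; [|apply NoDup_filter; exact HA].
      intros x1 x2 _ _ E. lia.
    - intros m Hm. apply in_map_iff in Hm as [n [<- Hn]].
      apply filter_In in Hn as [Hn Hnu]. apply Nat.eqb_eq in Hnu.
      pose proof (Hrange n Hn).
      apply filter_In. split; [apply in_seq; lia|].
      unfold nonsqf_in. apply andb_true_intro. split.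
      + apply Nat.eqb_eq. unfold c. rewrite <- Hnu, Nat.Div0.add_mod_idemp_l. reflexivity.
      + apply negb_true_iff. destruct (squarefreeb (n + b)) eqn:Es; [|reflexivity].
        exfalso. apply (Hsq n b Hn Hb), squarefreeb_iff, Es. }
  assert (HbN : (b <= N)%nat) by (apply Hrange; exact Hb).
  specialize (HNS N b c HN0 HbN Hc).
  unfold nonsqf_count in HNS. rewrite count_upto_add, plus_INR in HNS.
  apply le_INR in Hlen. unfold delta, count_res in Hdel. fold Au in Hdel.
  assert (0 < INR N) by (apply lt_0_INR; lia).
  pose proof nine_div_PI_sq_lt_1.
  assert ((1 - 9 / PI ^ 2 + eps / 100) * x < 36 * INR (length Au)).
  { apply Rmult_lt_reg_r with (/ x); [apply Rinv_0_lt_compat; lra|].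
    replace ((1 - 9 / PI ^ 2 + eps / 100) * x * / x) with (1 - 9 / PI ^ 2 + eps / 100) by (field; pose proof PI_RGT_0; lra).
    exact Hdel. }
  assert ((1 - 9 / PI ^ 2 + eps / 100) * INR N <= (1 - 9 / PI ^ 2 + eps / 100) * x)
    by (apply Rmult_le_compat_l; lra).
  nra.
Qed.

Lemma inU_witness eps x A u : 0 < eps -> inU eps x A u -> exists e, In e A /\ (e mod 36 = u)%nat.
Proof.
  intros He [Hu Hd]. unfold delta, count_res in Hd.
  destruct (filter (fun n => (n mod 36 =? u)%nat) A) as [|e l] eqn:Ef.
  - exfalso. pose proof nine_div_PI_sq_lt_1.
    change (INR (length [])) with 0 in Hd. unfold Rdiv in Hd. rewrite Rmult_0_r, Rmult_0_l in Hd. lra.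
  - exists e. assert (Hin : In e (filter (fun n => (n mod 36 =? u)%nat) A)) by (rewrite Ef; left; reflexivity).
    apply filter_In in Hin as [H1 H2]. apply Nat.eqb_eq in H2. auto.
Qed.

(** * The residue pattern *)

Section Pattern.
Local Open Scope nat_scope.

Definition Q_translates (u1 u2 r : nat) : bool := inQ ((u1 + r) mod 36) && inQ ((u2 + r) mod 36).

Definition pattern (a r : nat) : bool :=
  (r mod 2 =? 0) && Bool.eqb (r mod 4 =? 2) (r mod 9 =? a)
  && Bool.eqb (r mod 4 =? 0) ((r + a) mod 9 =? 0).

Definition pattern_check : bool :=
  forallb (fun u1 => forallb (fun u2 =>
    implb (negb (u1 =? u2) && Q_translates u1 u2 u1 && Q_translates u1 u2 u2
           && existsb (fun r => Q_translates u1 u2 r && negb (r mod 4 =? 0)) (seq 0 36)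
           && existsb (fun r => Q_translates u1 u2 r && negb (r mod 9 =? 0)) (seq 0 36)
           && existsb (fun r => Q_translates u1 u2 r && negb (r mod 4 =? 2)) (seq 0 36))
      (existsb (fun a => forallb (fun r => implb (Q_translates u1 u2 r) (pattern a r)) (seq 0 36))
               (seq 1 8)))
   (seq 0 36)) (seq 0 36).

Lemma pattern_check_true : pattern_check = true.
Proof. vm_compute. reflexivity. Qed.

Lemma exists_not_in {T} (A : list T) (P : T -> Prop) :
  ~ (forall n, In n A -> P n) -> exists n, In n A /\ ~ P n.
Proof. intros H. apply NNPP. intros H'. apply H. intros n Hn. apply NNPP. intros Hp. eauto. Qed.

Lemma exists_residue (A : list nat) u1 u2 (P : nat -> Prop) (p : nat -> bool) :
  (forall n, In n A -> Q_translates u1 u2 (n mod 36) = true) ->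
  (forall n, p (n mod 36) = true -> P n) -> ~ (forall n, In n A -> P n) ->
  existsb (fun r => Q_translates u1 u2 r && negb (p r)) (seq 0 36) = true.
Proof.
  intros HA Hp HP. destruct (exists_not_in A P HP) as [n [Hn Hnp]].
  apply existsb_exists. exists (n mod 36). split; [apply in_seq36, Nat.mod_upper_bound; lia|].
  rewrite HA by exact Hn. cbn [andb]. apply negb_true_iff.
  destruct (p (n mod 36)) eqn:E; [exfalso; apply Hnp, Hp, E|reflexivity].
Qed.

Lemma residue_pattern (A : list nat) u1 u2 e1 e2 :
  u1 <> u2 -> In e1 A -> e1 mod 36 = u1 -> In e2 A -> e2 mod 36 = u2 ->
  (forall n, In n A -> Q_translates u1 u2 (n mod 36) = true) ->
  ~ (forall n, In n A -> Nat.divide 4 n) -> ~ (forall n, In n A -> Nat.divide 9 n) ->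
  ~ (forall n, In n A -> n mod 4 = 2) ->
  exists a, 1 <= a <= 8 /\ forall n, In n A -> pattern a (n mod 36) = true.
Proof.
  intros Hne He1 E1 He2 E2 HA H4 H9 H2.
  assert (Hu1 : u1 < 36) by (rewrite <- E1; apply Nat.mod_upper_bound; lia).
  assert (Hu2 : u2 < 36) by (rewrite <- E2; apply Nat.mod_upper_bound; lia).
  pose proof pattern_check_true as F. unfold pattern_check in F.
  rewrite forallb_forall in F. specialize (F u1 (in_seq36 u1 Hu1)).
  rewrite forallb_forall in F. specialize (F u2 (in_seq36 u2 Hu2)).
  assert (Q1 : Q_translates u1 u2 u1 = true) by (rewrite <- E1 at 2; apply HA, He1).
  assert (Q2 : Q_translates u1 u2 u2 = true) by (rewrite <- E2 at 2; apply HA, He2).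
  rewrite (proj2 (Nat.eqb_neq u1 u2) Hne), Q1, Q2 in F.
  assert (D4 : forall n, ((n mod 36) mod 4 =? 0) = true -> Nat.divide 4 n)
    by (intros n E; apply Nat.eqb_eq in E; apply Nat.Lcm0.mod_divide; mod_lia).
  assert (D9 : forall n, ((n mod 36) mod 9 =? 0) = true -> Nat.divide 9 n)
    by (intros n E; apply Nat.eqb_eq in E; apply Nat.Lcm0.mod_divide; mod_lia).
  assert (D2 : forall n, ((n mod 36) mod 4 =? 2) = true -> n mod 4 = 2)
    by (intros n E; apply Nat.eqb_eq in E; mod_lia).
  rewrite (exists_residue A u1 u2 _ (fun r => r mod 4 =? 0) HA D4 H4),
    (exists_residue A u1 u2 _ (fun r => r mod 9 =? 0) HA D9 H9),
    (exists_residue A u1 u2 _ (fun r => r mod 4 =? 2) HA D2 H2) in F.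
  cbn [negb andb implb] in F. apply existsb_exists in F as [a [Ha Fa]].
  apply in_seq in Ha. rewrite forallb_forall in Fa. exists a. split; [lia|].
  intros n Hn. specialize (Fa (n mod 36) (in_seq36 _ (Nat.mod_upper_bound n 36 ltac:(lia)))).
  rewrite HA in Fa by exact Hn. exact Fa.
Qed.

Lemma pattern_spec a n : pattern a (n mod 36) = true ->
  Nat.Even n /\ (n mod 4 = 2 <-> n mod 9 = a) /\ (n mod 4 = 0 <-> (n + a) mod 9 = 0).
Proof.
  unfold pattern. intros H.
  apply andb_prop in H as [H H0]. apply andb_prop in H as [H2 H42].
  apply Nat.eqb_eq in H2. apply eqb_prop in H42, H0.
  replace ((n mod 36) mod 4) with (n mod 4) in H42, H0 by mod_lia.
  replace ((n mod 36) mod 9) with (n mod 9) in H42 by mod_lia.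
  replace ((n mod 36 + a) mod 9) with ((n + a) mod 9) in H0 by mod_lia.
  split; [exists (n / 2); mod_lia|].
  rewrite <- !Nat.eqb_eq, H42, H0. tauto.
Qed.

End Pattern.

Theorem lemma2 :
  forall eps : R, eps > 0 ->
  exists x0 : R, forall (x : R) (A : list nat),
    x >= x0 ->
    NoDup A ->
    (forall n, In n A -> (1 <= n)%nat /\ INR n <= x) ->
    INR (length A) > (delta0 + eps) * x ->
    (forall a b, In a A -> In b A -> ~ squarefree (a + b)) ->
    ~ (forall n, In n A -> Nat.divide 4 n) ->
    ~ (forall n, In n A -> Nat.divide 9 n) ->
    ~ (forall n, In n A -> n mod 4 = 2%nat) ->
    (* |U| >= 2 *)
    (exists a1 a2 : nat, a1 <> a2 /\ inU eps x A a1 /\ inU eps x A a2) ->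
    (forall n, In n A -> Nat.Even n) /\
    exists a : nat, (1 <= a <= 8)%nat /\
      forall n, In n A ->
        (n mod 4 = 2%nat <-> n mod 9 = a) /\
        (n mod 4 = 0%nat <-> (n + a) mod 9 = 0%nat).
Proof.
  intros eps He. destruct (nonsqf_interval_bound eps He) as [N0 HNS]. exists (INR N0 + 2).
  intros x A Hx HA Hr _ Hsq H4 H9 H2 [u1 [u2 [Hne [HU1 HU2]]]].
  pose proof (pos_INR N0).
  destruct (floor_nat x ltac:(lra)) as [N [HN1 HN2]].
  assert (HN0 : (N0 < N)%nat) by (apply INR_lt; lra).
  assert (Hrange : forall n, In n A -> (1 <= n <= N)%nat).
  { intros n Hn. destruct (Hr n Hn) as [h1 h2].
    assert (INR n < INR (S N)) by (rewrite S_INR; lra). apply INR_lt in H0. lia. }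
  assert (HQ : forall n, In n A -> Q_translates u1 u2 (n mod 36) = true).
  { intros n Hn. unfold Q_translates. rewrite !Nat.Div0.add_mod_idemp_r.
    rewrite !(translate_inQ eps N0 x A N _ n He HNS) by (assumption || lia). reflexivity. }
  destruct (inU_witness eps x A u1 He HU1) as [e1 [He1 E1]].
  destruct (inU_witness eps x A u2 He HU2) as [e2 [He2 E2]].
  destruct (residue_pattern A u1 u2 e1 e2 Hne He1 E1 He2 E2 HQ H4 H9 H2) as [a [Ha Hpat]].
  split.
  - intros n Hn. apply (pattern_spec a n), Hpat, Hn.
  - exists a. split; [exact Ha|]. intros n Hn. apply (pattern_spec a n), Hpat, Hn.
Qed.
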